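(* Let $R$ be a weakly $r$-clean ring whose only idempotents are $0$ and $1$. Then the center $Z(R)=\{z\in R: zx=xz \text{ for all } x\in R\}$ of $R$ is a weakly $r$-clean ring.
   Context: Rings are associative with identity. $Idem(R)$ denotes the idempotents of $R$ and $Reg(R)=\{r\in R:\ r=ryr \text{ for some } y\in R\}$ its regular elements. An element $x\in R$ is weakly $r$-clean if $x=r+e$ or $x=r-e$ for some $r\in Reg(R)$, $e\in Idem(R)$; $R$ is weakly $r$-clean if all its elements are weakly $r$-clean. *)

From mathcomp Require Import all_boot all_algebra.
Set Implicit Arguments. Unset Strict Implicit. Unset Printing Implicit Defensive.
Import GRing.Theory.
Local Open Scope ring_scope.

(* Notions relative to a subset S of a ring R (S will be R itself or its
   center Z(R), which is a subring; all operations of Z(R) are those of R). *)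

Definition idem_in (R : pzRingType) (S : R -> Prop) (e : R) : Prop :=
  S e /\ e * e = e.

Definition reg_in (R : pzRingType) (S : R -> Prop) (r : R) : Prop :=
  S r /\ exists y : R, S y /\ r = r * y * r.

Definition weakly_r_clean_elt_in (R : pzRingType) (S : R -> Prop) (x : R) : Prop :=
  exists r e : R, reg_in S r /\ idem_in S e /\ (x = r + e \/ x = r - e).

Definition weakly_r_clean_in (R : pzRingType) (S : R -> Prop) : Prop :=
  forall x : R, S x -> weakly_r_clean_elt_in S x.

Definition whole (R : pzRingType) : R -> Prop := fun _ => True.

Definition weakly_r_clean (R : pzRingType) : Prop := weakly_r_clean_in (@whole R).

Definition center (R : pzRingType) : R -> Prop :=
  fun z => forall x : R, z * x = x * z.

From mathcomp Require Import all_boot all_algebra.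
Local Open Scope ring_scope.
Import GRing.Theory.

Set Implicit Arguments.
Unset Strict Implicit.
Unset Printing Implicit Defensive.

(* Write a central x as r + e or r - e with r regular and e idempotent in R.
   As e is 0 or 1 it is central, hence so is r.  If r = r y r, then r y is an
   idempotent, so either r y = 0, whence r = 0 is regular in the center, or
   r y = 1, whence r is a central unit and its inverse y is central too. *)

Section Center.

Variable R : pzRingType.

Lemma center0 : center (0 : R).
Proof. by move=> x; rewrite mul0r mulr0. Qed.

Lemma center1 : center (1 : R).
Proof. by move=> x; rewrite mul1r mulr1. Qed.

Lemma centerD (a b : R) : center a -> center b -> center (a + b).
Proof. by move=> Ca Cb x; rewrite mulrDl mulrDr Ca Cb. Qed.

Lemma centerB (a b : R) : center a -> center b -> center (a - b).
Proof. by move=> Ca Cb x; rewrite mulrBl mulrBr Ca Cb. Qed.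

Lemma center_inv (r y : R) : center r -> r * y = 1 -> center y.
Proof.
move=> Cr ry1 x; have yr1 : y * r = 1 by rewrite -Cr.
by rewrite -[y * x]mulr1 -ry1 !mulrA -(mulrA y x r) -Cr mulrA yr1 mul1r.
Qed.

Lemma reg_mul_idem (r y : R) : r = r * y * r -> (r * y) * (r * y) = r * y.
Proof. by move=> ryr; rewrite mulrA -ryr. Qed.

Hypothesis idem01 : forall e : R, e * e = e -> e = 0 \/ e = 1.

Lemma center_idem (e : R) : e * e = e -> center e.
Proof. by case/idem01 => ->; [exact: center0 | exact: center1]. Qed.

Lemma center_reg_in_center (r y : R) :
  center r -> r = r * y * r -> reg_in (@center R) r.
Proof.
move=> Cr ryr; split=> //.
case: (idem01 (reg_mul_idem ryr)) => ry.
- by exists 0; split; [exact: center0 | rewrite mulr0 mul0r {1}ryr ry mul0r].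
- by exists y; split=> //; exact: center_inv ry.
Qed.

End Center.

Theorem theorem2p17 (R : pzRingType) :
  weakly_r_clean R ->
  (forall e : R, e * e = e -> e = 0 \/ e = 1) ->
  weakly_r_clean_in (@center R).
Proof.
move=> rclean idem01 z Cz.
have [r [e [[_ [y [_ ryr]]] [[_ ee] zre]]]] := rclean z I.
have Ce := center_idem idem01 ee.
have Cr : center r.
  case: zre => zre.
  - have -> : r = z - e by rewrite zre addrK.
    exact: centerB.
  - have -> : r = z + e by rewrite zre subrK.
    exact: centerD.
exists r, e; split; first exact: center_reg_in_center ryr.
by split.
Qed.
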